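(* Let $\{\mathcal Z_n\}$ be a Galton–Watson process with countably many types and irreducible mean progeny matrix $M$ satisfying the dichotomy property. Suppose there exist a probability vector $\boldsymbol\alpha_1$ with all entries strictly positive and $\lambda_1<1$ such that $\boldsymbol\alpha_1M\le\lambda_1\boldsymbol\alpha_1$, and a probability vector $\boldsymbol\alpha_2$ and $\lambda_2>1$ such that $\boldsymbol\alpha_2M\ge\lambda_2\boldsymbol\alpha_2$. Then $\boldsymbol q=\boldsymbol 1$; if $\varphi_0$ has distribution $\boldsymbol\alpha_1$ then $\mathbb E[|\mathcal Z_n|]\le\lambda_1^n$ for all $n$, so $\mathbb E[|\mathcal Z_n|]\to0$; and if $\varphi_0$ has distribution $\boldsymbol\alpha_2$ then $\mathbb E[|\mathcal Z_n|]\to\infty$ while the population still becomes extinct with probability 1.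
   Context: A (multitype) Galton–Watson process with type set $\mathcal S=\{1,2,3,\dots\}$ is $\{\mathcal Z_n=(Z_{n1},Z_{n2},\dots)\}_{n\in\mathbb N}$, $Z_{n\ell}$ the number of type-$\ell$ individuals in generation $n$, started from one individual of (possibly random) type $\varphi_0$; $|\mathcal Z_n|=\sum_\ell Z_{n\ell}$. The mean progeny matrix is $M_{ij}=\partial P_i/\partial s_j|_{\boldsymbol s=\boldsymbol 1}$ (assumed finite). Global extinction: $q_i=\mathbb P[\lim_n|\mathcal Z_n|=0\mid\varphi_0=i]$. The dichotomy property holds if for every initial type $i$, with probability 1 either $|\mathcal Z_n|=0$ eventually or $|\mathcal Z_n|\to\infty$. Vector inequalities are componentwise. *)

From HB Require Import structures.
From mathcomp Require Import all_boot all_order all_algebra.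
From mathcomp Require Import all_classical all_reals all_analysis.
Set Implicit Arguments. Unset Strict Implicit. Unset Printing Implicit Defensive.
Import Order.TTheory GRing.Theory Num.Theory.
Local Open Scope classical_set_scope.
Local Open Scope ring_scope.

(* Types are indexed by nat (type 0 plays the role of the paper's type 1).
   A generation is a count vector  z : nat -> nat  (z l = number of type-l
   individuals). *)
Definition pop := nat -> nat.

Definition finpop (z : pop) : Prop := exists N, forall l, (N <= l)%N -> z l = 0%N.

Definition zeropop : pop := fun _ => 0%N.

Definition unitpop (i : nat) : pop := fun l => (l == i : nat).

Section GW.
Variable R : realType.

Definition popsize (z : pop) : \bar R := \esum_(l in setT) ((z l)%:R)%:E.

(* p i v = probability that an individual of type i has offspring vector v *)
Definition offspring_law (p : nat -> pop -> R) : Prop :=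
  forall i, (forall v, 0 <= p i v) /\ (forall v, ~ finpop v -> p i v = 0) /\
            \esum_(v in setT) (p i v)%:E = 1%E.

Fixpoint offs_conv (p : nat -> pop -> R) (xs : seq nat) (w : pop) : \bar R :=
  match xs with
  | [::] => (\1_[set zeropop] w)%:E
  | x :: xs' => \esum_(v in [set v : pop | forall l, (v l <= w l)%N])
                  ((p x v)%:E * offs_conv p xs' (fun l => (w l - v l)%N))%E
  end.

(* list of the individuals (by type) of z, assuming z is supported in [0,N) *)
Definition indiv (N : nat) (z : pop) : seq nat :=
  flatten [seq nseq (z l) l | l <- iota 0 N].

Definition hist (T : Type) (Z : nat -> T -> pop) (n : nat) (zs : nat -> pop) : set T :=
  [set w | forall k, (k <= n)%N -> Z k w = zs k].

Definition GW_process (d : measure_display) (T : measurableType d)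
  (P : probability T R) (Z : nat -> T -> pop) (p : nat -> pop -> R)
  (alpha : nat -> R) : Prop :=
  [/\ (forall n l k, measurable [set w | Z n w l = k]),
      (forall n w, finpop (Z n w)),
      (forall i, P [set w | Z 0%N w = unitpop i] = (alpha i)%:E) &
      (forall n (zs : nat -> pop) N, (forall l, (N <= l)%N -> zs n l = 0%N) ->
         P (hist Z n.+1 zs) = (P (hist Z n zs) * offs_conv p (indiv N (zs n)) (zs n.+1))%E)].

Definition mean_matrix (p : nat -> pop -> R) (i j : nat) : \bar R :=
  \esum_(v in setT) (p i v * (v j)%:R)%:E.

Fixpoint mxpow (M : nat -> nat -> \bar R) (n : nat) (i j : nat) : \bar R :=
  match n with
  | 0%N => ((i == j)%:R)%:E
  | n'.+1 => \esum_(k in setT) (mxpow M n' i k * M k j)%E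
  end.

Definition irreducible (M : nat -> nat -> \bar R) : Prop :=
  forall i j, exists n, (0 < mxpow M n i j)%E.

Definition vecmat (a : nat -> R) (M : nat -> nat -> \bar R) (j : nat) : \bar R :=
  \esum_(i in setT) ((a i)%:E * M i j)%E.

Definition prob_vector (a : nat -> R) : Prop :=
  (forall i, 0 <= a i) /\ \esum_(i in setT) (a i)%:E = 1%E.

Definition delta (i : nat) : nat -> R := fun j => (j == i)%:R.

Definition extinct (T : Type) (Z : nat -> T -> pop) : set T :=
  [set w | exists n, forall m, (n <= m)%N -> Z m w = zeropop].

Definition explodes (T : Type) (Z : nat -> T -> pop) : set T :=
  [set w | forall K : R, exists n, forall m, (n <= m)%N -> (K%:E < popsize (Z m w))%E].

End GW.

From HB Require Import structures.
From mathcomp Require Import all_boot all_order all_algebra.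
From mathcomp Require Import all_classical all_reals all_analysis.
From mathcomp Require Import zify ring lra.
Import Order.TTheory GRing.Theory Num.Theory.
Set Implicit Arguments. Unset Strict Implicit. Unset Printing Implicit Defensive.
Local Open Scope classical_set_scope.
Local Open Scope ring_scope.

(* The mean counts m_n(k) = E[H(Z_0) Z_n(k)] satisfy m_(n+1) = m_n M: condition
   on the trajectory up to time n (a countable partition once generations are
   encoded as finite sequences), where the children of the individuals of
   generation n are an independent sum with means given by M.  Comparing with
   the subinvariant vector alpha1, a start of type u has mean vector at most
   (alpha u / alpha1 u) lambda1^n alpha1, so P(Z_n <> 0, Z_0 = e_u) decays
   geometrically and is summable: every type dies out almost surely.  Started from alpha1 or
   alpha2 themselves, the same comparison gives E|Z_n| <= lambda1^n and
   E|Z_n| >= lambda2^n. *)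

Section esum_lemmas.
Context {R : realType}.
Local Open Scope ereal_scope.

Lemma esumZl (T : choiceType) (I : set T) (a : T -> \bar R) (r : R) :
  (0 <= r)%R -> (forall i, I i -> 0 <= a i) ->
  \esum_(i in I) (r%:E * a i) = r%:E * \esum_(i in I) a i.
Proof.
move=> r0 a0; rewrite !(esum_mkcond I).
set b := fun i => if i \in I then a i else 0.
have b0 i : 0 <= b i by rewrite /b; case: ifPn => // /set_mem/a0.
transitivity (\esum_(i in setT) (r%:E * b i)).
  by apply: eq_esum => i _; rewrite /b; case: ifPn; rewrite ?mule0.
rewrite /esum -ereal_supZl //; last first.
  by apply/set0P; exists 0, set0; [exact: fsets_set0|rewrite fsbig_set0].
congr ereal_sup; apply/seteqP; split => _ [X hX <-].
  by exists (\sum_(i \in X) b i); [exists X|rewrite ge0_mule_fsumr].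
by case: hX => Y hY <-; exists Y => //; rewrite ge0_mule_fsumr.
Qed.

Lemma esumZr (T : choiceType) (I : set T) (a : T -> \bar R) (r : R) :
  (0 <= r)%R -> (forall i, I i -> 0 <= a i) ->
  \esum_(i in I) (a i * r%:E) = (\esum_(i in I) a i) * r%:E.
Proof.
move=> r0 a0; rewrite muleC -esumZl //.
by apply: eq_esum => i _; rewrite muleC.
Qed.

Lemma esum_subset_eq (T : choiceType) (A B : set T) (a : T -> \bar R) :
  B `<=` A -> (forall i, A i -> 0 <= a i) -> (forall i, A i -> ~ B i -> a i = 0) ->
  \esum_(i in A) a i = \esum_(i in B) a i.
Proof.
move=> BA a0 aB; rewrite (esumID B) // [X in _ + X]esum1 ?adde0; last first.
  by move=> i [Ai nBi]; exact: aB.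
by rewrite (setIidr BA).
Qed.

Lemma le_esum_subset (T : choiceType) (A B : set T) (a : T -> \bar R) :
  B `<=` A -> (forall i, A i -> 0 <= a i) ->
  \esum_(i in B) a i <= \esum_(i in A) a i.
Proof.
move=> BA a0; rewrite [leRHS](esumID B) // (setIidr BA) leeDl //.
by apply: esum_ge0 => i [/a0].
Qed.

Lemma esum_ge_term (T : choiceType) (A : set T) (a : T -> \bar R) t :
  A t -> (forall i, A i -> 0 <= a i) -> a t <= \esum_(i in A) a i.
Proof.
move=> At a0; rewrite -esum_set1 ?a0 //.
by apply: le_esum_subset => // i ->.
Qed.

Lemma esum_setT_single (T : choiceType) (t : T) (a : T -> \bar R) :
  (forall i, 0 <= a i) -> (forall i, i <> t -> a i = 0) ->
  \esum_(i in setT) a i = a t.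
Proof.
move=> a0 at0; rewrite (@esum_subset_eq _ _ [set t]) ?esum_set1 //.
by move=> i _ /= it; exact: at0.
Qed.

Lemma esum_swap (T1 T2 : choiceType) (a : T1 -> T2 -> \bar R) :
  (forall i j, 0 <= a i j) ->
  \esum_(i in setT) \esum_(j in setT) a i j =
  \esum_(j in setT) \esum_(i in setT) a i j.
Proof.
move=> a0; have prodT (U V : choiceType) : [set: U] `*`` (fun=> [set: V]) = setT.
  by apply/seteqP; split.
rewrite !esum_esum // !prodT (reindex_esum setT _ (fun k : T2 * T1 => (k.2, k.1))) //.
split=> //; first by move=> [? ?] [? ?] _ _ [-> ->].
by move=> [i j] _; exists (j, i).
Qed.

End esum_lemmas.

Section matrix_iterates.
Local Open Scope ereal_scope.
Context {R : realType} (M : nat -> nat -> \bar R) (a : nat -> nat -> \bar R).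
Context (b : nat -> R) (lam c : R).
Hypothesis M0 : forall i j, 0 <= M i j.
Hypothesis b0 : forall k, (0 <= b k)%R.
Hypothesis c0 : (0 <= c)%R.
Hypothesis lam0 : (0 <= lam)%R.
Hypothesis a_succ : forall n j, a n.+1 j = \esum_(k in setT) (a n k * M k j).

Let esum_scaled n j :
  \esum_(k in setT) ((c * lam ^+ n * b k)%:E * M k j) =
  (c * lam ^+ n)%:E * vecmat b M j.
Proof.
rewrite /vecmat -esumZl ?mulr_ge0 ?exprn_ge0 // => [|k _]; last by rewrite mule_ge0 ?lee_fin.
by apply: eq_esum => k _; rewrite EFinM muleA.
Qed.

Let scaled_step n j :
  ((c * lam ^+ n)%:E * (lam * b j)%:E) = (c * lam ^+ n.+1 * b j)%:E.
Proof. by rewrite -EFinM exprS; congr EFin; ring. Qed.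

Lemma subinvariant_iterates_le :
  (forall j, a 0 j <= (c * b j)%:E) ->
  (forall j, vecmat b M j <= (lam * b j)%:E) ->
  forall n j, a n j <= (c * lam ^+ n * b j)%:E.
Proof.
move=> a0 bM; elim=> [|n IH] j; first by rewrite expr0 mulr1.
rewrite a_succ -scaled_step (le_trans _ (lee_wpmul2l _ (bM j))) //.
  by rewrite -esum_scaled; apply: le_esum => k _; exact: lee_wpmul2r.
by rewrite lee_fin mulr_ge0 ?exprn_ge0.
Qed.

Lemma superinvariant_iterates_ge :
  (forall j, (c * b j)%:E <= a 0 j) ->
  (forall j, (lam * b j)%:E <= vecmat b M j) ->
  forall n j, (c * lam ^+ n * b j)%:E <= a n j.
Proof.
move=> a0 bM; elim=> [|n IH] j; first by rewrite expr0 mulr1.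
rewrite a_succ -scaled_step (le_trans (lee_wpmul2l _ (bM j))) //.
  by rewrite lee_fin mulr_ge0 ?exprn_ge0.
by rewrite -esum_scaled; apply: le_esum => k _; exact: lee_wpmul2r.
Qed.

End matrix_iterates.

Lemma esum_prob_vector_scaled {R : realType} (b : nat -> R) (r : R) :
  prob_vector b -> (0 <= r)%R -> (\esum_(j in setT) (r * b j)%:E = r%:E)%E.
Proof.
move=> [b0 b1] r0; under eq_esum do rewrite EFinM.
by rewrite esumZl // ?b1 ?mule1 // => *; rewrite lee_fin.
Qed.

Lemma bernoulli_ineq {R : realType} (x : R) n : 0 <= x -> 1 + n%:R * x <= (1 + x) ^+ n.
Proof.
move=> x0; elim: n => [|n IH]; first by rewrite expr0 mul0r addr0.
have := exprn_ge0 n (addr_ge0 ler01 x0); have : 0 <= n%:R :> R by [].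
rewrite exprS -natr1; nra.
Qed.

Lemma cvgey_expr {R : realType} (x : R) : 1 < x ->
  ((fun n => (x ^+ n)%:E) @ \oo --> +oo)%E.
Proof.
move=> x1; have x10 : 0 < x - 1 by rewrite subr_gt0.
apply/cvgeyPge => K; have K0 : 0 <= `|K| / (x - 1) by rewrite divr_ge0 // ltW.
exists (Num.Def.archi_bound (`|K| / (x - 1))) => // n /= Nn; rewrite lee_fin.
have := archi_boundP K0; rewrite ltr_pdivrMr // => hN.
have hNn : (Num.Def.archi_bound (`|K| / (x - 1)))%:R <= n%:R :> R by rewrite ler_nat.
have := bernoulli_ineq n (ltW x10); rewrite (_ : 1 + (x - 1) = x); last by ring.
have := ler_norm K; nra.
Qed.

Lemma nneseries_geometric_fin {R : realType} (c lam : R) : 0 <= c -> 0 <= lam < 1 ->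
  (\sum_(0 <= k <oo) ((c * lam ^+ k)%:E) < +oo)%E.
Proof.
move=> c0 /andP [l0 l1]; apply: le_lt_trans (ltry (c / (1 - lam))).
apply: lime_le; first by apply: is_cvg_nneseries => k _; rewrite lee_fin mulr_ge0 ?exprn_ge0.
apply: nearW => n; rewrite sumEFin lee_fin.
have := congr1 (fun f => f n) (geometric_seriesE c (negbT (lt_eqF l1))); rewrite /series /= => ->.
have l1' : 0 < 1 - lam by rewrite subr_gt0.
rewrite ler_pdivlMr // divfK ?gt_eqF //.
have : 0 <= lam ^+ n by rewrite exprn_ge0.
nra.
Qed.

Section countable_partition.
Context d (T : measurableType d) (R : realType) (mu : {measure set T -> \bar R}).
Context (I : countType) (E : I -> set T).
Hypothesis mE : forall i, measurable (E i).
Hypothesis dE : forall i j, i <> j -> E i `&` E j = set0.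
Local Open Scope ereal_scope.

Let Enat (m : nat) : set T := if pickle_inv m is Some i then E i else set0.

Let EnatK i : Enat (pickle i) = E i.
Proof. by rewrite /Enat pickleK_inv. Qed.

Let mEnat m : measurable (Enat m).
Proof. by rewrite /Enat; case: pickle_inv. Qed.

Let pickle_invK_some m (i : I) : pickle_inv m = Some i -> pickle i = m.
Proof. by move=> e; have := @pickle_invK I m; rewrite e. Qed.

Let trivEnat (K : set nat) : trivIset K Enat.
Proof.
move=> m1 m2 _ _ [x []]; rewrite /Enat.
case e1 : pickle_inv => [i1|//] x1; case e2 : pickle_inv => [i2|//] x2.
have e : i1 = i2 by apply: contrapT => /dE /seteqP [/(_ x) + _]; apply.
by rewrite -(pickle_invK_some e1) -(pickle_invK_some e2) e.
Qed.

Lemma measure_count_bigcup (S : set I) :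
  mu (\bigcup_(i in S) E i) = \esum_(i in S) mu (E i).
Proof.
have -> : \bigcup_(i in S) E i = \bigcup_(m in pickle @` S) Enat m.
  apply/seteqP; split => x.
    by move=> [i Si Eix]; exists (pickle i); [exists i|rewrite EnatK].
  by move=> [_ [i Si <-]]; rewrite EnatK => ?; exists i.
rewrite measure_bigcup //= nneseries_esum //.
rewrite (_ : [set x | x \in _] = pickle @` S); last first.
  by apply/seteqP; split => x /=; rewrite inE.
rewrite esum_image /=; last by move=> ? ? _ _ /(pcan_inj pickleK_inv).
by apply: eq_esum => i _; rewrite EnatK.
Qed.

Hypothesis cE : \bigcup_(i in setT) E i = setT.

Lemma integral_count_partition (f : T -> \bar R) (c : I -> \bar R) :
  (forall i x, E i x -> f x = c i) -> (forall i, 0 <= c i) ->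
  \int[mu]_x f x = \esum_(i in setT) (c i * mu (E i)).
Proof.
move=> fc c0.
have cov : \bigcup_k Enat k = setT.
  apply/seteqP; split => // x _; have : (\bigcup_(i in setT) E i) x by rewrite cE.
  by move=> [i _ Eix]; exists (pickle i); rewrite ?EnatK.
pose c' m := if pickle_inv m is Some i then c i else 0.
have fc' m x : Enat m x -> f x = c' m.
  by rewrite /Enat /c'; case: pickle_inv => // i; exact: fc.
have c'0 m : 0 <= c' m by rewrite /c'; case: pickle_inv.
rewrite -cov ge0_integral_bigcup //; last 2 first.
- move=> _ Y mY; rewrite cov setTI.
  have -> : f @^-1` Y = \bigcup_(m in [set m | Y (c' m)]) Enat m.
    apply/seteqP; split => x /=; last by move=> [m /= Ym Emx]; rewrite (fc' m x).
    move=> Yfx; have : (\bigcup_k Enat k) x by rewrite cov.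
    by move=> [m _ Emx]; exists m => //=; rewrite -(fc' m x).
  exact: bigcup_measurable.
- by move=> x [m _ /fc' ->].
transitivity (\sum_(m <oo) (c' m * mu (Enat m))).
  apply: eq_eseriesr => m _; rewrite -(integral_cst _ (mEnat m)).
  by apply: eq_integral => x /set_mem Ex; rewrite (fc' m x).
rewrite nneseries_esumT; last by move=> m; rewrite mule_ge0.
rewrite (esum_subset_eq (B := pickle @` [set: I])) //; last 2 first.
- by move=> m _; rewrite mule_ge0.
- move=> m _ nm; rewrite /c' /Enat; case e : pickle_inv => [i|]; last by rewrite mul0e.
  by exfalso; apply: nm; exists i => //; rewrite (pickle_invK_some e).
rewrite esum_image; last by move=> ? ? _ _ /(pcan_inj pickleK_inv).
by apply: eq_esum => i _; rewrite EnatK /c' pickleK_inv.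
Qed.

End countable_partition.

Definition seqpop (t : seq nat) : pop := fun l => nth 0%N t l.

(* Any bound on the support will do: the [trimmed] sequences are exactly the
   range of [popseq]. *)
Definition popseq (z : pop) : seq nat :=
  mkseq z (xget 0%N [set N | forall l, (N <= l)%N -> z l = 0%N]).

Definition trimmed (t : seq nat) : bool := popseq (seqpop t) == t.

Lemma seqpopK (z : pop) : finpop z -> seqpop (popseq z) = z.
Proof.
move=> /(xgetPex 0%N) zN; apply: funext => l; rewrite /seqpop /popseq.
set N := xget _ _ in zN *; case: (ltnP l N) => hl; first by rewrite nth_mkseq.
by rewrite nth_default ?size_mkseq // zN.
Qed.

Lemma nth_popseq (z : pop) l : finpop z -> nth 0%N (popseq z) l = z l.
Proof. by move/seqpopK/(congr1 (fun f => f l)). Qed.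

Lemma popseqK (t : seq nat) : trimmed t -> popseq (seqpop t) = t.
Proof. by move/eqP. Qed.

Lemma trimmed_popseq (z : pop) : finpop z -> trimmed (popseq z).
Proof. by move=> fz; rewrite /trimmed seqpopK. Qed.

Lemma finpop_seqpop (t : seq nat) : finpop (seqpop t).
Proof. by exists (size t) => l hl; rewrite /seqpop nth_default. Qed.

Lemma popseq_inj (z1 z2 : pop) : finpop z1 -> finpop z2 ->
  popseq z1 = popseq z2 -> z1 = z2.
Proof. by move=> f1 f2 e; rewrite -(seqpopK f1) -(seqpopK f2) e. Qed.

Lemma finpop_unitpop i : finpop (unitpop i).
Proof. by exists i.+1 => l; rewrite /unitpop; case: eqP => // ->; rewrite ltnn. Qed.

Lemma unitpop_inj : injective unitpop.
Proof. by move=> i j /(congr1 (fun z => z i)); rewrite /unitpop eqxx; case: eqP. Qed.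

Lemma popseq_unitpop_inj i j : popseq (unitpop i) = popseq (unitpop j) -> i = j.
Proof. by move/(popseq_inj (finpop_unitpop i) (finpop_unitpop j))/unitpop_inj. Qed.

Section pop_sums.
Context {R : realType}.
Local Open Scope ereal_scope.

Lemma esum_trimmed (g : pop -> \bar R) :
  (forall z, 0 <= g z) -> (forall z, ~ finpop z -> g z = 0) ->
  \esum_(t in [set t | trimmed t]) g (seqpop t) = \esum_(z in setT) g z.
Proof.
move=> g0 gf; rewrite (@esum_subset_eq _ _ setT finpop) //; last first.
  by move=> z _; exact: gf.
rewrite (reindex_esum [set t | trimmed t] finpop seqpop) //; split.
- by move=> t _; exact: finpop_seqpop.
- by move=> t1 t2 /set_mem/popseqK e1 /set_mem/popseqK e2 e; rewrite -e1 -e2 e.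
- by move=> z fz; exists (popseq z); [exact: trimmed_popseq|exact: seqpopK].
Qed.

Lemma popsize_ge0 (z : pop) : 0 <= popsize R z.
Proof. by apply: esum_ge0 => *; rewrite lee_fin. Qed.

Lemma popsize_ge1 (z : pop) : z <> zeropop -> 1 <= popsize R z.
Proof.
move=> nz; have [l zl] : exists l, z l != 0%N.
  by apply: contra_notP nz => /forallNP h; apply/funext => l; apply/eqP/negPn/negP/h.
apply: le_trans (esum_ge_term (a := fun k => (z k)%:R%:E) (t := l) _ _) => //.
by rewrite lee_fin ler1n lt0n.
Qed.

Lemma sum_indiv (F : nat -> \bar R) N (z : pop) :
  (forall k, 0 <= F k) -> (forall l, (N <= l)%N -> z l = 0%N) ->
  \sum_(x <- indiv N z) F x = \esum_(k in setT) ((z k)%:R%:E * F k).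
Proof.
move=> F0 zN; rewrite /indiv big_flatten big_map.
under eq_bigr do rewrite big_nseq iter_addr_0.
rewrite -nneseries_esumT; last by move=> k; rewrite mule_ge0.
under eq_eseriesr do rewrite mule_natl.
rewrite (nneseries_split 0 N); last by move=> k _; rewrite -mule_natl mule_ge0.
rewrite add0n [X in _ + X]eseries0 ?adde0; last by move=> k hk _; rewrite zN.
by rewrite /index_iota subn0.
Qed.

End pop_sums.

Definition popadd (v u : pop) : pop := fun l => (v l + u l)%N.

Section offspring_convolution.
Context {R : realType} (p : nat -> pop -> R).
Hypothesis hp : offspring_law p.
Local Open Scope ereal_scope.

Lemma offspring_ge0 x v : (0 <= p x v)%R.
Proof. by case: (hp x). Qed.

Lemma offspring_mass x : \esum_(v in setT) (p x v)%:E = 1.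
Proof. by case: (hp x) => _ []. Qed.

Lemma mean_matrix_ge0 i j : 0 <= mean_matrix p i j.
Proof. by apply: esum_ge0 => v _; rewrite lee_fin mulr_ge0 ?offspring_ge0. Qed.

Lemma offs_conv_ge0 xs w : 0 <= offs_conv p xs w.
Proof.
elim: xs w => [|x xs IH] w /=; first by rewrite lee_fin indicE.
by apply: esum_ge0 => v _; rewrite mule_ge0 // lee_fin offspring_ge0.
Qed.

Lemma offs_conv_nonfinpop xs w : ~ finpop w -> offs_conv p xs w = 0.
Proof.
elim: xs w => [|x xs IH] w nw /=.
  by rewrite indicE memNset //= => wz; apply: nw; rewrite wz; exists 0%N.
apply: esum1 => v /= vw; have [[N' hN']|nv] := pselect (finpop v); last first.
  by case: (hp x) => _ [-> //]; rewrite mul0e.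
rewrite IH ?mule0 // => -[N hN]; apply: nw; exists (maxn N N') => l.
rewrite geq_max => /andP [h1 h2]; have := hN l h1; have := hN' l h2; have := vw l; lia.
Qed.

Lemma esum_offs_conv_cons x xs (h : pop -> R) : (forall w, 0 <= h w)%R ->
  \esum_(w in setT) (offs_conv p (x :: xs) w * (h w)%:E) =
  \esum_(v in setT) \esum_(u in setT)
     ((p x v)%:E * offs_conv p xs u * (h (popadd v u))%:E).
Proof.
move=> h0 /=; have ge0 v u w : 0 <= (p x v)%:E * offs_conv p xs u * (h w)%:E.
  by rewrite !mule_ge0 ?offs_conv_ge0 // lee_fin ?offspring_ge0.
transitivity (\esum_(w in setT) \esum_(v in [set v : pop | forall l, (v l <= w l)%N])
    ((p x v)%:E * offs_conv p xs (fun l => (w l - v l)%N) * (h w)%:E)).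
  apply: eq_esum => w _; rewrite -esumZr // => v _.
  by rewrite mule_ge0 ?offs_conv_ge0 // lee_fin offspring_ge0.
rewrite esum_esum // esum_esum //.
rewrite (reindex_esum (setT `*`` fun=> setT) _
    (fun k : pop * pop => (popadd k.1 k.2, k.1))) /=.
  apply: eq_esum => -[v u] _ /=; congr (_ * offs_conv p xs _ * _).
  by apply: funext => l; rewrite /popadd addKn.
split.
- by move=> [v u] _ /=; split => // l; rewrite /popadd leq_addr.
- move=> [v1 u1] [v2 u2] _ _ /= [e1 e2]; subst v2; congr pair; apply: funext => l.
  by have := congr1 (fun f => f l) e1; rewrite /popadd => /addnI.
- move=> [w v] [_ /= vw]; exists (v, fun l => (w l - v l)%N) => //=.
  by congr pair; apply: funext => l; rewrite /popadd subnKC.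
Qed.

Lemma offs_conv_mass xs : \esum_(w in setT) offs_conv p xs w = 1.
Proof.
elim: xs => [|x xs IH].
  rewrite (esum_setT_single (t := zeropop)) => [|w|w wz] /=.
  - by rewrite indicE mem_set.
  - by rewrite lee_fin indicE.
  - by rewrite indicE memNset.
under eq_esum do rewrite -[offs_conv _ _ _]mule1.
rewrite esum_offs_conv_cons //.
transitivity (\esum_(v in setT) ((p x v)%:E * \esum_(u in setT) offs_conv p xs u)).
  apply: eq_esum => v _; rewrite -esumZl ?offspring_ge0 // => [|u _].
    by apply: eq_esum => u _; rewrite mule1.
  exact: offs_conv_ge0.
by rewrite IH; under eq_esum do rewrite mule1; exact: offspring_mass.
Qed.

Hypothesis hM : forall i j, mean_matrix p i j \is a fin_num.

Lemma offs_conv_mean xs j :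
  \esum_(w in setT) (offs_conv p xs w * (w j)%:R%:E) =
  \sum_(x <- xs) mean_matrix p x j.
Proof.
elim: xs => [|x xs IH].
  rewrite big_nil esum1 // => w _ /=; rewrite indicE.
  by case: (boolP (w \in _)) => [/set_mem -> | _]; rewrite ?mul0e // mul1e.
rewrite esum_offs_conv_cons; last by move=> w; exact: ler0n.
transitivity (\esum_(v in setT) ((p x v * (v j)%:R)%:E * 1
   + (p x v)%:E * \sum_(y <- xs) mean_matrix p y j)).
  apply: eq_esum => v _; rewrite -IH -(offs_conv_mass xs).
  rewrite -[X in _ = X + _]esumZl ?mulr_ge0 ?offspring_ge0 //; last first.
    by move=> *; exact: offs_conv_ge0.
  rewrite -[X in _ = _ + X]esumZl ?offspring_ge0 //; last first.
    by move=> *; rewrite mule_ge0 ?offs_conv_ge0.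
  rewrite -esumD => [|u _|u _]; last 2 first.
  - by rewrite mule_ge0 ?offs_conv_ge0 // lee_fin mulr_ge0 ?offspring_ge0.
  - by rewrite !mule_ge0 ?offs_conv_ge0 ?lee_fin ?offspring_ge0.
  apply: eq_esum => u _; rewrite /popadd natrD EFinD ge0_muleDr ?lee_fin // EFinM.
  by congr (_ + _); rewrite -!muleA; congr (_ * _); rewrite muleC.
have sum_fin : \sum_(y <- xs) mean_matrix p y j \is a fin_num.
  by apply/sum_fin_numP => *; exact: hM.
have sum_ge0 : (0 <= fine (\sum_(y <- xs) mean_matrix p y j))%R.
  by rewrite fine_ge0 // sume_ge0 // => *; exact: mean_matrix_ge0.
rewrite esumD => [|v _|v _]; last 2 first.
- by rewrite mule_ge0 // lee_fin mulr_ge0 ?offspring_ge0.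
- by rewrite -(fineK sum_fin) -EFinM lee_fin mulr_ge0 ?offspring_ge0.
rewrite big_cons; congr (_ + _); first by under eq_esum do rewrite mule1.
by rewrite -(fineK sum_fin) esumZr ?offspring_mass ?mul1e // => v _; rewrite lee_fin offspring_ge0.
Qed.

End offspring_convolution.

(* A trajectory up to time [n] is encoded as the list of its [n.+1]
   generations, each as a trimmed sequence; there are countably many. *)
Definition traj (T : Type) (Z : nat -> T -> pop) n w : seq (seq nat) :=
  [seq popseq (Z k w) | k <- iota 0 n.+1].

Definition cell (T : Type) (Z : nat -> T -> pop) n s : set T :=
  [set w | traj Z n w = s].

Definition traj_shape n (s : seq (seq nat)) : bool :=
  (size s == n.+1) && all trimmed s.

Definition hist_of (s : seq (seq nat)) : nat -> pop :=
  fun k => seqpop (nth [::] s k).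

Lemma trimmed_nth s k : all trimmed s -> (k < size s)%N -> trimmed (nth [::] s k).
Proof. by move=> /allP h hk; apply: h; rewrite mem_nth. Qed.

Lemma hist_ext (T : Type) (Z : nat -> T -> pop) n zs1 zs2 :
  (forall k, (k <= n)%N -> zs1 k = zs2 k) -> hist Z n zs1 = hist Z n zs2.
Proof.
move=> h; apply/seteqP; split => w /= hw k kn; first by rewrite -h // hw.
by rewrite h // hw.
Qed.

Section trajectories.
Context d (T : measurableType d) (Z : nat -> T -> pop).
Hypothesis mZ : forall n l k, measurable [set w | Z n w l = k].
Hypothesis fZ : forall n w, finpop (Z n w).

Lemma measurable_popeq m z : measurable [set w | Z m w = z].
Proof.
rewrite (_ : [set w | Z m w = z] = \bigcap_l [set w | Z m w l = z l]).
  exact: bigcapT_measurable.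
apply/seteqP; split => w /=; first by move=> e l _ /=; rewrite e.
by move=> h; apply: funext => l; exact: h.
Qed.

Lemma measurable_extinct : measurable (extinct Z).
Proof.
rewrite (_ : extinct Z =
    \bigcup_n \bigcap_(m in [set m | (n <= m)%N]) [set w | Z m w = zeropop]).
  apply: bigcupT_measurable => n; apply: bigcap_measurableType => m _.
  exact: measurable_popeq.
apply/seteqP; split => w /= [n].
  by move=> h; exists n => // m; exact: h.
by move=> _ h; exists n => m; exact: h.
Qed.

Lemma traj_shape_traj n w : traj_shape n (traj Z n w).
Proof.
rewrite /traj_shape size_map size_iota eqxx.
by apply/allP => t /mapP [k _ ->]; exact: trimmed_popseq.
Qed.

Lemma nth_traj n w k : (k <= n)%N -> nth [::] (traj Z n w) k = popseq (Z k w).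
Proof. by move=> kn; rewrite (nth_map 0%N) ?size_iota ?ltnS // nth_iota. Qed.

Lemma cell_hist n s : traj_shape n s -> cell Z n s = hist Z n (hist_of s).
Proof.
move=> /andP [/eqP ss ts]; apply/seteqP; split => w /=.
  by move=> <- k kn; rewrite /hist_of nth_traj // seqpopK.
move=> h; apply: (@eq_from_nth _ [::]); first by rewrite size_map size_iota ss.
move=> k; rewrite size_map size_iota ltnS => kn.
by rewrite nth_traj // h // popseqK // trimmed_nth // ss.
Qed.

Lemma cell_not_shape n s : ~~ traj_shape n s -> cell Z n s = set0.
Proof. by apply: contraNeq => /set0P [w <-]; exact: traj_shape_traj. Qed.

Lemma measurable_hist n zs : measurable (hist Z n zs).
Proof.
rewrite (_ : hist Z n zs = \bigcap_(k in [set k | (k <= n)%N]) [set w | Z k w = zs k]).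
  by apply: bigcap_measurableType => k _; exact: measurable_popeq.
by apply/seteqP; split => w h k; [move=> kn; exact: h|exact: h].
Qed.

Lemma measurable_cell n s : measurable (cell Z n s).
Proof.
have [shape|nshape] := boolP (traj_shape n s); last by rewrite cell_not_shape.
by rewrite cell_hist //; exact: measurable_hist.
Qed.

Lemma cell_disjoint n s1 s2 : s1 <> s2 -> cell Z n s1 `&` cell Z n s2 = set0.
Proof. by move=> ne; apply/seteqP; split => w // [/= e1 e2]; apply: ne; rewrite -e1 -e2. Qed.

Lemma bigcup_cell n : \bigcup_(s in setT) cell Z n s = setT.
Proof. by apply/seteqP; split => w // _; exists (traj Z n w). Qed.

End trajectories.

Section trajectory_sums.
Context {R : realType}.
Local Open Scope ereal_scope.

Lemma esum_traj_shape0 (g : seq (seq nat) -> \bar R) :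
  (forall s, 0 <= g s) -> (forall s, ~~ traj_shape 0 s -> g s = 0) ->
  \esum_(s in setT) g s = \esum_(t in [set t | trimmed t]) g [:: t].
Proof.
move=> g0 gs; rewrite (esum_subset_eq (B := [set s | traj_shape 0 s])) //; last first.
  by move=> s _ /negP; exact: gs.
apply: reindex_esum; split.
- by move=> t /= tt; rewrite /traj_shape /= tt.
- by move=> t1 t2 _ _ [].
- move=> s /andP [/eqP]; case: s => [|t []] //= _; rewrite andbT => tt.
  by exists t.
Qed.

Lemma esum_traj_shape_succ n (g : seq (seq nat) -> \bar R) :
  (forall s, 0 <= g s) -> (forall s, ~~ traj_shape n.+1 s -> g s = 0) ->
  \esum_(s in setT) g s =
  \esum_(s in [set s | traj_shape n s]) \esum_(t in [set t | trimmed t]) g (rcons s t).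
Proof.
move=> g0 gs; rewrite (esum_subset_eq (B := [set s | traj_shape n.+1 s])) //; last first.
  by move=> s _ /negP; exact: gs.
rewrite esum_esum //; apply: reindex_esum; split.
- move=> [s t] [/= /andP [/eqP ss ts] tt].
  by rewrite /traj_shape size_rcons ss eqxx all_rcons tt ts.
- by move=> [s1 t1] [s2 t2] _ _ /= /rcons_inj [-> ->].
- move=> s' /=; case/lastP: s' => [|s t] /andP [] //.
  rewrite size_rcons eqSS all_rcons => ss /andP [tt ts].
  by exists (s, t) => //; split; rewrite //= /traj_shape ss ts.
Qed.

End trajectory_sums.

Section GW_means.
Local Open Scope ereal_scope.
Context {R : realType} (p : nat -> pop -> R).
Hypothesis hp : offspring_law p.
Hypothesis hM : forall i j, mean_matrix p i j \is a fin_num.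
Context d (T : measurableType d) (P : probability T R) (Z : nat -> T -> pop).
Context (alpha : nat -> R).
Hypothesis GW : GW_process P Z p alpha.

Let mZ : forall n l k, measurable [set w | Z n w l = k].
Proof. by case: GW. Qed.

Let fZ : forall n w, finpop (Z n w).
Proof. by case: GW. Qed.

Let Z_succ n (zs : nat -> pop) N : (forall l, (N <= l)%N -> zs n l = 0%N) ->
  P (hist Z n.+1 zs) = P (hist Z n zs) * offs_conv p (indiv N (zs n)) (zs n.+1).
Proof. by case: GW => _ _ _; apply. Qed.

Lemma P_cellE n s : P (cell Z n s) = (fine (P (cell Z n s)))%:E.
Proof. by rewrite fineK // fin_num_measure //; exact: measurable_cell. Qed.

Lemma P_cell_not_shape n s : ~~ traj_shape n s -> P (cell Z n s) = 0.
Proof. by move=> ns; rewrite cell_not_shape ?measure0. Qed.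

Lemma P_cell_rcons n s t : traj_shape n s -> trimmed t ->
  P (cell Z n.+1 (rcons s t)) =
  P (cell Z n s) * offs_conv p (indiv (size (nth [::] s n)) (hist_of s n)) (seqpop t).
Proof.
move=> sh tt; have /andP [/eqP ss ts] := sh.
have sh' : traj_shape n.+1 (rcons s t).
  by rewrite /traj_shape size_rcons ss eqxx all_rcons tt ts.
rewrite (cell_hist fZ sh') (cell_hist fZ sh) (Z_succ (N := size (nth [::] s n))); last first.
  by move=> l hl; rewrite /hist_of nth_rcons ss ltnSn /seqpop nth_default.
rewrite /hist_of nth_rcons ss ltnSn nth_rcons ss ltnn eqxx; congr (P _ * _).
by apply: hist_ext => k kn; rewrite nth_rcons ss ltnS kn.
Qed.

Lemma esum_cell_rcons_count n s j : traj_shape n s ->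
  \esum_(t in [set t | trimmed t]) (P (cell Z n.+1 (rcons s t)) * (seqpop t j)%:R%:E) =
  P (cell Z n s) * \esum_(k in setT) ((hist_of s n k)%:R%:E * mean_matrix p k j).
Proof.
move=> sh; set N := size (nth [::] s n).
have ge0 w : 0 <= offs_conv p (indiv N (hist_of s n)) w * (w j)%:R%:E.
  by rewrite mule_ge0 ?offs_conv_ge0.
transitivity (\esum_(t in [set t | trimmed t]) (P (cell Z n s) *
    (offs_conv p (indiv N (hist_of s n)) (seqpop t) * (seqpop t j)%:R%:E))).
  by apply: eq_esum => t tt; rewrite P_cell_rcons // muleA.
rewrite P_cellE esumZl ?fine_ge0 ?measure_ge0 //.
rewrite (esum_trimmed (g := fun w => offs_conv p (indiv N (hist_of s n)) w * (w j)%:R%:E));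
  last 2 first.
- exact: ge0.
- by move=> w nw; rewrite (offs_conv_nonfinpop hp _ nw) mul0e.
rewrite (offs_conv_mean hp hM) (sum_indiv (N := N)) => [//|k|l hl].
  exact: (mean_matrix_ge0 hp).
by rewrite /hist_of /seqpop nth_default.
Qed.

(* [mean_count n H k] is the mean of [H Z_0 * Z_n k], as a sum over trajectory
   cells ([H] reads [Z_0] through its trimmed sequence). *)
Definition mean_count n (H : seq nat -> R) k : \bar R :=
  \esum_(s in setT) (P (cell Z n s) * (H (nth [::] s 0) * (nth 0%N (nth [::] s n) k)%:R)%:E).

Lemma mean_count_succ n H j : (forall t, 0 <= H t)%R ->
  mean_count n.+1 H j = \esum_(k in setT) (mean_count n H k * mean_matrix p k j).
Proof.
move=> H0; have Pc_ge0 m s : (0 <= fine (P (cell Z m s)))%R by rewrite fine_ge0.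
have M0 := mean_matrix_ge0 hp.
have summand_ge0 m s k :
    0 <= P (cell Z m s) * (H (nth [::] s 0) * (nth 0%N (nth [::] s m) k)%:R)%:E.
  by rewrite mule_ge0 // lee_fin mulr_ge0.
rewrite /mean_count (esum_traj_shape_succ (n := n)) => [|s|s ns]; last 2 first.
- exact: summand_ge0.
- by rewrite P_cell_not_shape ?mul0e.
transitivity (\esum_(s in [set s | traj_shape n s]) \esum_(k in setT)
    (P (cell Z n s) * (H (nth [::] s 0) * (nth 0%N (nth [::] s n) k)%:R)%:E
     * mean_matrix p k j)).
  apply: eq_esum => s sh; have /andP [/eqP ss _] := sh.
  transitivity ((H (nth [::] s 0))%:E *
     \esum_(t in [set t | trimmed t]) (P (cell Z n.+1 (rcons s t)) * (seqpop t j)%:R%:E)).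
    rewrite -esumZl // => [|t _]; last by rewrite mule_ge0.
    apply: eq_esum => t tt; rewrite nth_rcons ss ltn0Sn nth_rcons ss ltnn eqxx.
    by rewrite EFinM muleCA.
  rewrite esum_cell_rcons_count // P_cellE muleA -EFinM -esumZl ?mulr_ge0 //; last first.
    by move=> k _; rewrite mule_ge0.
  by apply: eq_esum => k _; rewrite muleA -!EFinM; congr (_%:E * _); ring.
rewrite -(esum_subset_eq (A := setT)) //; last 2 first.
- by move=> s _; apply: esum_ge0 => k _; rewrite mule_ge0.
- by move=> s _ /negP ns; apply: esum1 => k _; rewrite P_cell_not_shape ?mul0e.
rewrite esum_swap; last by move=> s k; rewrite mule_ge0.
apply: eq_esum => k _; rewrite -(fineK (hM k j)) esumZr //.
by rewrite fine_ge0.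
Qed.

Hypothesis pa : prob_vector alpha.

Let Z0 i : P [set w | Z 0%N w = unitpop i] = (alpha i)%:E.
Proof. by case: GW. Qed.

Let measurable_bigcup_start :
  measurable (\bigcup_(u in setT) [set w | Z 0%N w = unitpop u]).
Proof. by apply: bigcup_measurable => u _; exact: measurable_popeq. Qed.

Lemma P_not_unit_start : P (~` \bigcup_(u in setT) [set w | Z 0%N w = unitpop u]) = 0.
Proof.
rewrite probability_setC // measure_count_bigcup => [|u|u v uv].
- by rewrite (eq_esum (fun u _ => Z0 u)); case: pa => _ ->; rewrite subee.
- exact: measurable_popeq.
- by apply/seteqP; split => w // [/= e1 e2]; apply: uv; apply: unitpop_inj; rewrite -e1 -e2.
Qed.

Lemma P_cell0 t : trimmed t -> P (cell Z 0 [:: t]) = P [set w | Z 0%N w = seqpop t].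
Proof.
move=> tt; rewrite (cell_hist fZ) /traj_shape /= ?tt //; congr (P _).
apply/seteqP; split => w /=; first by move/(_ 0%N (leqnn 0)).
by move=> h k; rewrite leqn0 => /eqP ->.
Qed.

Lemma P_cell0_not_unit t : trimmed t -> ~ (exists i, t = popseq (unitpop i)) ->
  P (cell Z 0 [:: t]) = 0.
Proof.
move=> tt nu; apply/eqP; rewrite eq_le measure_ge0 andbT -P_not_unit_start P_cell0 //.
apply: le_measure; rewrite ?inE; [exact: measurable_popeq|exact: measurableC|].
by move=> w /= e [u _ eu]; apply: nu; exists u; rewrite -(popseqK tt) -e eu.
Qed.

Lemma mean_count0 H k : (forall t, 0 <= H t)%R ->
  mean_count 0 H k = (alpha k * H (popseq (unitpop k)))%:E.
Proof.
move=> H0; have summand_ge0 s k' :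
    0 <= P (cell Z 0 s) * (H (nth [::] s 0) * (nth 0%N (nth [::] s 0) k')%:R)%:E.
  by rewrite mule_ge0 // lee_fin mulr_ge0.
rewrite /mean_count esum_traj_shape0 => [|s|s ns]; last 2 first.
- exact: summand_ge0.
- by rewrite P_cell_not_shape ?mul0e.
rewrite /= (esum_subset_eq (B := range (fun i => popseq (unitpop i)))); last 3 first.
- by move=> _ [i _ <-]; exact/trimmed_popseq/finpop_unitpop.
- by move=> t _; exact: summand_ge0.
- by move=> t tt nu; rewrite P_cell0_not_unit ?mul0e // => -[i e]; apply: nu; exists i.
rewrite esum_image; last by move=> i i' _ _ /popseq_unitpop_inj.
rewrite (esum_setT_single (t := k)) => [|i|i ik].
- rewrite (P_cell0 (trimmed_popseq (finpop_unitpop k))) (seqpopK (finpop_unitpop k)).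
  by rewrite Z0 (nth_popseq _ (finpop_unitpop k)) /unitpop eqxx mulr1.
- exact: summand_ge0.
- rewrite (nth_popseq _ (finpop_unitpop i)) /unitpop.
  by case: eqP => [/esym/ik //|_]; rewrite mulr0 mule0.
Qed.

Lemma integral_popsize n :
  \int[P]_w popsize R (Z n w) = \esum_(k in setT) mean_count n (fun=> 1%R) k.
Proof.
rewrite (@integral_count_partition _ _ _ P _ (cell Z n) (measurable_cell mZ fZ n)
    (@cell_disjoint _ _ Z n) (bigcup_cell Z n) _ (fun s => popsize R (hist_of s n)))
  => [|s w|s]; last 2 first.
- by move=> <-; rewrite /hist_of nth_traj // seqpopK.
- exact: popsize_ge0.
rewrite /mean_count -esum_swap => [|s k]; last by rewrite mule_ge0 // lee_fin mul1r.
apply: eq_esum => s _; under [RHS]eq_esum do rewrite mul1r.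
by rewrite [in RHS]P_cellE esumZl ?fine_ge0 // -P_cellE muleC.
Qed.

Definition start_indicator u (t : seq nat) : R := (t == popseq (unitpop u))%:R.

(* A Markov bound: on [Z_m <> 0] the population size is at least one. *)
Lemma P_alive_start_le m u :
  P ([set w | Z m w <> zeropop] `&` [set w | Z 0%N w = unitpop u]) <=
  \esum_(k in setT) mean_count m (start_indicator u) k.
Proof.
set S := [set s | nth [::] s 0 = popseq (unitpop u) /\ hist_of s m <> zeropop].
have -> : [set w | Z m w <> zeropop] `&` [set w | Z 0%N w = unitpop u] =
    \bigcup_(s in S) cell Z m s.
  apply/seteqP; split => w /=.
    move=> [nz z0]; exists (traj Z m w) => //; split; first by rewrite nth_traj // z0.
    by rewrite /hist_of nth_traj // seqpopK.
  move=> [s [s0 sm] e]; have {}e : traj Z m w = s := e; subst s.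
  rewrite /hist_of nth_traj // seqpopK // in sm.
  rewrite nth_traj // in s0; split => //.
  exact: (popseq_inj (fZ _ _) (finpop_unitpop _) s0).
have summand_ge0 s k : 0 <= P (cell Z m s) *
    (start_indicator u (nth [::] s 0) * (nth 0%N (nth [::] s m) k)%:R)%:E.
  by rewrite mule_ge0 // lee_fin mulr_ge0.
rewrite measure_count_bigcup => [|s|s1 s2]; last 2 first.
- exact: measurable_cell.
- exact: cell_disjoint.
rewrite /mean_count -esum_swap //; apply: le_trans (le_esum_subset (B := S) _ _) => //; last first.
  by move=> s _; apply: esum_ge0 => k _.
apply: le_esum => s [s0 sm]; rewrite /start_indicator s0 eqxx.
under eq_esum do rewrite mul1r.
rewrite P_cellE esumZl ?fine_ge0 // -P_cellE -[X in X <= _]mule1 lee_wpmul2l //.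
exact: (popsize_ge1 sm).
Qed.

Let mean_count_ones_succ n j : mean_count n.+1 (fun=> 1%R) j =
  \esum_(k in setT) (mean_count n (fun=> 1%R) k * mean_matrix p k j).
Proof. exact: mean_count_succ. Qed.

Let mean_count_ones0 j : mean_count 0 (fun=> 1%R) j = (1 * alpha j)%:E.
Proof. by rewrite mean_count0 // mulr1 mul1r. Qed.

Lemma mean_popsize_le (lam : R) : (0 <= lam)%R ->
  (forall j, vecmat alpha (mean_matrix p) j <= (lam * alpha j)%:E) ->
  forall n, \int[P]_w popsize R (Z n w) <= (lam ^+ n)%:E.
Proof.
move=> lam0 sub n; have [alpha0 _] := pa.
rewrite integral_popsize -(esum_prob_vector_scaled pa (exprn_ge0 n lam0)).
apply: le_esum => k _; rewrite -[(lam ^+ n)%R]mul1r.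
apply: (subinvariant_iterates_le (mean_matrix_ge0 hp) alpha0 ler01 lam0 mean_count_ones_succ) => // j.
by rewrite mean_count_ones0.
Qed.

Lemma mean_popsize_ge (lam : R) : (0 <= lam)%R ->
  (forall j, (lam * alpha j)%:E <= vecmat alpha (mean_matrix p) j) ->
  forall n, (lam ^+ n)%:E <= \int[P]_w popsize R (Z n w).
Proof.
move=> lam0 sup n; have [alpha0 _] := pa.
rewrite integral_popsize -(esum_prob_vector_scaled pa (exprn_ge0 n lam0)).
apply: le_esum => k _; rewrite -[(lam ^+ n)%R]mul1r.
apply: (superinvariant_iterates_ge (mean_matrix_ge0 hp) alpha0 ler01 lam0 mean_count_ones_succ) => // j.
by rewrite mean_count_ones0.
Qed.

End GW_means.

Section extinction.
Local Open Scope ereal_scope.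
Context {R : realType} (p : nat -> pop -> R).
Hypothesis hp : offspring_law p.
Hypothesis hM : forall i j, mean_matrix p i j \is a fin_num.
Context (alpha1 : nat -> R) (lambda1 : R).
Hypothesis pa1 : prob_vector alpha1.
Hypothesis alpha1_gt0 : forall i, (0 < alpha1 i)%R.
Hypothesis lambda1_ge0 : (0 <= lambda1)%R.
Hypothesis lambda1_lt1 : (lambda1 < 1)%R.
Hypothesis alpha1_subinvariant :
  forall j, vecmat alpha1 (mean_matrix p) j <= (lambda1 * alpha1 j)%:E.
Context d (T : measurableType d) (P : probability T R) (Z : nat -> T -> pop).
Context (alpha : nat -> R).
Hypothesis GW : GW_process P Z p alpha.
Hypothesis pa : prob_vector alpha.

Let mZ : forall n l k, measurable [set w | Z n w l = k].
Proof. by case: GW. Qed.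

Let start u := [set w | Z 0%N w = unitpop u].

Let measurable_start u : measurable (start u).
Proof. exact: measurable_popeq. Qed.

Let measurable_survive_start u : measurable (~` extinct Z `&` start u).
Proof. by apply: measurableI => //; apply: measurableC; exact: measurable_extinct. Qed.

Let ratio_ge0 u : (0 <= alpha u / alpha1 u)%R.
Proof. by rewrite divr_ge0 ?(ltW (alpha1_gt0 u)) //; case: pa. Qed.

(* From type [u] the means are dominated by [alpha u / alpha1 u] times the
   subinvariant measure [alpha1], which decays like [lambda1 ^+ m]. *)
Lemma P_alive_start_geometric m u :
  P ([set w | Z m w <> zeropop] `&` start u) <=
  (alpha u / alpha1 u * lambda1 ^+ m)%:E.
Proof.
have H0 (t : seq nat) : (0 <= start_indicator (R := R) u t)%R.
  by rewrite /start_indicator ler0n.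
have bound := subinvariant_iterates_le (mean_matrix_ge0 hp) (fun k => ltW (alpha1_gt0 k))
  (ratio_ge0 u) lambda1_ge0 (fun n j => mean_count_succ hp hM GW n j H0).
apply: le_trans (P_alive_start_le GW m u) _.
rewrite -(esum_prob_vector_scaled pa1 (mulr_ge0 (ratio_ge0 u) (exprn_ge0 m lambda1_ge0))).
apply: le_esum => k _; apply: bound => // j.
rewrite (mean_count0 GW pa) // /start_indicator; case: eqP => [/popseq_unitpop_inj ->|_].
  by rewrite mulr1 divfK // gt_eqF.
by rewrite mulr0 lee_fin mulr_ge0 // ltW.
Qed.

Lemma P_survive_start u : P (~` extinct Z `&` start u) = 0.
Proof.
have c0 := ratio_ge0 u; set c := (alpha u / alpha1 u)%R in c0 *.
have mF m : measurable ([set w | Z m w <> zeropop] `&` start u).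
  by apply: measurableI => //; apply: measurableC; exact: measurable_popeq.
have tail N : P (~` extinct Z `&` start u) <= \sum_(N <= m <oo) (c * lambda1 ^+ m)%:E.
  apply: le_trans (@measure_sigma_subadditive_tail _ _ _ P _ _ N mF (measurable_survive_start u) _) _.
    move=> w [/= ne Au]; have /existsNP [m /not_implyP [Nm nz]] :
        ~ (forall m, (N <= m)%N -> Z m w = zeropop) by move=> h; apply: ne; exists N.
    by exists m; [rewrite /= ltnNge Nm|split].
  apply: lee_nneseries => [m _ _|m _]; first exact: measure_ge0.
  exact: P_alive_start_geometric.
have tail0 : \sum_(N <= m <oo) (c * lambda1 ^+ m)%:E @[N --> \oo] --> 0.
  apply: nneseries_tail_cvg => [|m _]; last by rewrite lee_fin mulr_ge0 ?exprn_ge0.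
  by apply: nneseries_geometric_fin; rewrite ?lambda1_ge0.
apply/eqP; rewrite eq_le measure_ge0 andbT -(cvg_lim _ tail0) //.
by apply: lime_ge; [apply/cvg_ex; exists 0|exact: nearW].
Qed.

Lemma P_extinct : P (extinct Z) = 1.
Proof.
have mE := measurable_extinct mZ.
have mS : measurable (\bigcup_(u in setT) start u) by exact: bigcup_measurable.
have survive_started : P (\bigcup_(u in setT) (~` extinct Z `&` start u)) = 0.
  rewrite measure_count_bigcup => [|u|u v uv].
  - by apply: esum1 => u _; exact: P_survive_start.
  - exact: measurable_survive_start.
  - apply/seteqP; split => w // [[_ e1] [_ e2]].
    by apply: uv; apply: unitpop_inj; rewrite -e1 -e2.
have survive0 : P (~` extinct Z) = 0.
  apply/eqP; rewrite eq_le measure_ge0 andbT.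
  rewrite -[0]adde0 -{1}survive_started -(P_not_unit_start GW pa).
  apply: le_trans (measureU2 _ _ _); last 2 first.
  - by apply: bigcup_measurable => u _; exact: measurable_survive_start.
  - exact: measurableC.
  apply: le_measure; rewrite ?inE; [exact: measurableC| |].
    apply: measurableU; last exact: measurableC.
    by apply: bigcup_measurable => u _; exact: measurable_survive_start.
  move=> w ne; have [[u _ su]|nu] := pselect ((\bigcup_(u in setT) start u) w).
    by left; exists u.
  by right.
rewrite -[LHS]adde0 -survive0 -measureU ?setICr //; last exact: measurableC.
by rewrite setUCr; exact: probability_setT.
Qed.

End extinction.

Lemma subinvariant_rate_ge0 {R : realType} (M : nat -> nat -> \bar R) (b : nat -> R)
    (lam : R) j :
  (forall i k, (0 <= M i k)%E) -> (forall i, 0 <= b i) -> 0 < b j ->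
  (vecmat b M j <= (lam * b j)%:E)%E -> 0 <= lam.
Proof.
move=> M0 b0 bj sub; have : (0 <= vecmat b M j)%E.
  by apply: esum_ge0 => i _; rewrite mule_ge0 ?lee_fin.
move/le_trans/(_ sub); rewrite lee_fin; nra.
Qed.

Lemma prob_vector_delta {R : realType} i : prob_vector (delta R i).
Proof.
split=> [j|]; first by rewrite /delta ler0n.
rewrite (esum_setT_single (t := i)) => [|j|j ji]; rewrite /delta ?eqxx ?lee_fin //.
by case: eqP.
Qed.

Theorem mainTheorem9 (R : realType) (p : nat -> pop -> R)
  (alpha1 alpha2 : nat -> R) (lambda1 lambda2 : R) :
  offspring_law p ->
  (forall i j, mean_matrix p i j \is a fin_num) ->
  irreducible (mean_matrix p) ->
  (* dichotomy property, for every initial type i *)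
  (forall (i : nat) (d : measure_display) (T : measurableType d)
          (P : probability T R) (Z : nat -> T -> pop),
      GW_process P Z p (delta R i) ->
      P (extinct Z `|` explodes R Z) = 1%E) ->
  prob_vector alpha1 -> (forall i, 0 < alpha1 i) -> lambda1 < 1 ->
  (forall j, (vecmat alpha1 (mean_matrix p) j <= (lambda1 * alpha1 j)%:E)%E) ->
  prob_vector alpha2 -> 1 < lambda2 ->
  (forall j, ((lambda2 * alpha2 j)%:E <= vecmat alpha2 (mean_matrix p) j)%E) ->
  (* q = 1 *)
  (forall (i : nat) (d : measure_display) (T : measurableType d)
          (P : probability T R) (Z : nat -> T -> pop),
      GW_process P Z p (delta R i) -> P (extinct Z) = 1%E) /\
  (* start distributed as alpha1 *)
  (forall (d : measure_display) (T : measurableType d)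
          (P : probability T R) (Z : nat -> T -> pop),
      GW_process P Z p alpha1 ->
      (forall n, ((\int[P]_w popsize R (Z n w))%E <= (lambda1 ^+ n)%:E)%E) /\
      ((fun n => (\int[P]_w popsize R (Z n w))%E) @ \oo --> (0:R)%:E)) /\
  (* start distributed as alpha2 *)
  (forall (d : measure_display) (T : measurableType d)
          (P : probability T R) (Z : nat -> T -> pop),
      GW_process P Z p alpha2 ->
      ((fun n => (\int[P]_w popsize R (Z n w))%E) @ \oo --> +oo%E) /\
      P (extinct Z) = 1%E).
Proof.
move=> hp hM _ _ pa1 alpha1_gt0 lambda1_lt1 sub1 pa2 lambda2_gt1 sup2.
have lambda1_ge0 : 0 <= lambda1.
  by apply: (subinvariant_rate_ge0 (mean_matrix_ge0 hp) _ (alpha1_gt0 0%N) (sub1 0%N)); case: pa1.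
have extinct1 := P_extinct hp hM pa1 alpha1_gt0 lambda1_ge0 lambda1_lt1 sub1.
split; [|split] => [i d T P Z GW|d T P Z GW|d T P Z GW].
- exact: extinct1 GW (prob_vector_delta i).
- have mean_le := mean_popsize_le hp hM GW pa1 lambda1_ge0 sub1.
  split => //; apply: (@squeeze_cvge _ _ _ _ (cst 0%E) _ (fun n => (lambda1 ^+ n)%:E)).
  + by apply: nearW => n; rewrite mean_le andbT integral_ge0 // => w _; exact: popsize_ge0.
  + exact: cvg_cst.
  + by apply: cvg_EFin; [exact: nearW|apply: cvg_expr; rewrite ger0_norm].
- split; last exact: extinct1 GW pa2.
  have lambda2_ge0 : 0 <= lambda2 by rewrite ltW // (lt_trans ltr01).
  apply: gee_cvgy (cvgey_expr lambda2_gt1); apply: nearW.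
  exact: (mean_popsize_ge hp hM GW pa2 lambda2_ge0 sup2).
Qed.
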